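(* For every $T\ge1$ and $\tau_0\in\{1,\dots,T\}$ there exist parameters $\eta>0$ and $\alpha\in[0,1]$ (depending on $\tau_0$, $T$ and $d$) such that the fixed-share algorithm with these parameters satisfies, for all loss vectors $\ell_1,\dots,\ell_T\in[0,1]^d$, \[ \mathcal R_T^{\tau_0\text{-adapt}}\le\sqrt{\frac{\tau_0}{2}\Big(\tau_0\,h\Big(\frac1{\tau_0}\Big)+\ln d\Big)}\le\sqrt{\frac{\tau_0}{2}\ln(ed\tau_0)}. \]
   Context: Let $d\ge1$ and $\Delta_d=\{q\in[0,1]^d:\sum_{i=1}^d q_i=1\}$. The generalized share algorithm with learning rate $\eta>0$ and mixing functions $\psi_t:[0,1]^{td}\to\Delta_d$ ($t\ge2$) works as follows: $\hat p_1=v_1=(1/d,\dots,1/d)$. At each round $t=1,2,\dots$ it predicts $\hat p_t=(\hat p_{1,t},\dots,\hat p_{d,t})\in\Delta_d$, observes a loss vector $\ell_t=(\ell_{1,t},\dots,\ell_{d,t})\in[0,1]^d$ (arbitrary), and suffers loss $\hat p_t^\top\ell_t$. It then forms the pre-weights $v_{j,t+1}=\hat p_{j,t}e^{-\eta\ell_{j,t}}/\sum_{i=1}^d\hat p_{i,t}e^{-\eta\ell_{i,t}}$ for $j=1,\dots,d$, sets $v_{t+1}=(v_{1,t+1},\dots,v_{d,t+1})$, and defines $\hat p_{t+1}=\psi_{t+1}(V_{t+1})$ where $V_{t+1}=[v_{i,s}]_{1\le i\le d,1\le s\le t+1}$ is the $d\times(t+1)$ matrix of all pre-weights so far. The fixed-share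 algorithm with parameters $\eta>0$, $\alpha\in[0,1]$ is the generalized share algorithm with the mixing rule $\hat p_{j,t+1}=\alpha/d+(1-\alpha)v_{j,t+1}$ for all $j$ and $t\ge1$. The $\tau_0$-adaptive regret is $\mathcal R_T^{\tau_0\text{-adapt}}=\max\big\{\sum_{t=r}^s\hat p_t^\top\ell_t-\min_{q\in\Delta_d}\sum_{t=r}^sq^\top\ell_t\big\}$, the maximum over integers $1\le r\le s\le T$ with $s+1-r\le\tau_0$. $h(x)=-x\ln x-(1-x)\ln(1-x)$ is the binary entropy on $[0,1]$ (with $0\ln0=0$). *)

From Stdlib Require Import Reals Lra.
Open Scope R_scope.

Fixpoint sumR (n : nat) (f : nat -> R) : R :=
  match n with
  | O => 0
  | S m => sumR m f + f m
  end.

(* sum_{t=r}^{s} f t  (= 0 if s < r) *)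
Definition sum_range (r s : nat) (f : nat -> R) : R :=
  sumR (S s - r) (fun k => f (r + k)%nat).

(* Experts are indexed 0..d-1; rounds are indexed 1,2,...;
   ell t i is the loss of expert i at round t. *)

Definition preweight (d : nat) (eta : R) (p : nat -> R) (l : nat -> R) (j : nat) : R :=
  p j * exp (- eta * l j) / sumR d (fun i => p i * exp (- eta * l i)).

(* Fixed-share predictions: fixed_share d eta alpha ell t = \hat p_t
   for t >= 1 (the value at t = 0 is irrelevant and set equal to \hat p_1). *)
Fixpoint fixed_share (d : nat) (eta alpha : R) (ell : nat -> nat -> R) (t : nat)
  : nat -> R :=
  match t with
  | O => fun _ => 1 / INR d
  | S O => fun _ => 1 / INR d
  | S ((S _) as t') =>
      fun j => alpha / INR d
               + (1 - alpha) * preweight d eta (fixed_share d eta alpha ell t') (ell t') j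
  end.

Definition dotR (d : nat) (q l : nat -> R) : R := sumR d (fun i => q i * l i).

Definition in_simplex (d : nat) (q : nat -> R) : Prop :=
  (forall i, (i < d)%nat -> 0 <= q i <= 1) /\ sumR d q = 1.

Definition xlnx (x : R) : R := if Req_EM_T x 0 then 0 else x * ln x.

Definition hbin (x : R) : R := - xlnx x - xlnx (1 - x).

Definition interval_regret (d : nat) (p : nat -> nat -> R) (ell : nat -> nat -> R)
  (q : nat -> R) (r s : nat) : R :=
  sum_range r s (fun t => dotR d (p t) (ell t) - dotR d q (ell t)).

(* Fix a window length tau0 and take the mixing rate alpha = 1/tau0.  For an
   expert j and a window r..s of length at most tau0 the argument is the
   classical potential one:

   - Hoeffding's lemma bounds the normaliser of the exponential-weights update,
     so every pre-weight satisfies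
       v_{j,t+1} >= p_{j,t} exp(eta (p_t.l_t - l_{j,t}) - eta^2/8);
   - the mixing step gives p_{j,t+1} >= (1 - alpha) v_{j,t+1} and p_{j,r} >= alpha/d;
   - chaining these along the window and using v <= 1 yields
       alpha/d (1-alpha)^(tau0-1) exp(eta R_j - tau0 eta^2/8) <= 1,
     where R_j is the regret against expert j on the window.
   With alpha = 1/tau0 the logarithm of the constant is ln d + tau0 h(1/tau0) =: L,
   so eta R_j <= L + tau0 eta^2 / 8, and the tuning eta = sqrt(8 L / tau0) gives
   R_j <= sqrt(tau0 L / 2).  The regret against a mixture q is the q-average of
   the R_j.  Finally h(x) <= x (1 - ln x) gives L <= ln(e d tau0). *)

From Stdlib Require Import Reals Lra Lia.
From Coquelicot Require Import Coquelicot.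
Open Scope R_scope.

Lemma sumR_ext n f g : (forall i, (i < n)%nat -> f i = g i) -> sumR n f = sumR n g.
Proof.
  induction n as [|n IH]; simpl; intros H; [reflexivity|].
  rewrite IH by (intros; apply H; lia). rewrite H by lia. reflexivity.
Qed.

Lemma sumR_plus n f g : sumR n (fun i => f i + g i) = sumR n f + sumR n g.
Proof. induction n as [|n IH]; simpl; [ring|]. rewrite IH. ring. Qed.

Lemma sumR_minus n f g : sumR n (fun i => f i - g i) = sumR n f - sumR n g.
Proof. induction n as [|n IH]; simpl; [ring|]. rewrite IH. ring. Qed.

Lemma sumR_scal n c f : sumR n (fun i => c * f i) = c * sumR n f.
Proof. induction n as [|n IH]; simpl; [ring|]. rewrite IH. ring. Qed.

Lemma sumR_const n c : sumR n (fun _ => c) = INR n * c.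
Proof. induction n as [|n IH]; simpl sumR; [simpl; ring|]. rewrite IH, S_INR. ring. Qed.

Lemma sumR_le n f g : (forall i, (i < n)%nat -> f i <= g i) -> sumR n f <= sumR n g.
Proof.
  induction n as [|n IH]; simpl; intros H; [lra|].
  pose proof (H n ltac:(lia)). pose proof (IH ltac:(intros; apply H; lia)). lra.
Qed.

Lemma sumR_nonneg n f : (forall i, (i < n)%nat -> 0 <= f i) -> 0 <= sumR n f.
Proof.
  intros H. replace 0 with (sumR n (fun _ => 0)) by (rewrite sumR_const; ring).
  now apply sumR_le.
Qed.

Lemma sumR_pos n f : (1 <= n)%nat -> (forall i, (i < n)%nat -> 0 < f i) -> 0 < sumR n f.
Proof.
  destruct n as [|n]; [lia|]. intros _ H. simpl.
  pose proof (sumR_nonneg n f ltac:(intros; left; apply H; lia)).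
  pose proof (H n ltac:(lia)). lra.
Qed.

Lemma sumR_term_le n f j :
  (forall i, (i < n)%nat -> 0 <= f i) -> (j < n)%nat -> f j <= sumR n f.
Proof.
  induction n as [|n IH]; simpl; intros H Hj; [lia|].
  pose proof (sumR_nonneg n f ltac:(intros; apply H; lia)).
  pose proof (H n ltac:(lia)).
  destruct (Nat.eq_dec j n) as [->|Hne]; [lra|].
  pose proof (IH ltac:(intros; apply H; lia) ltac:(lia)). lra.
Qed.

Lemma sumR_exchange n m (F : nat -> nat -> R) :
  sumR n (fun i => sumR m (fun j => F i j)) = sumR m (fun j => sumR n (fun i => F i j)).
Proof.
  induction n as [|n IH]; simpl.
  - rewrite sumR_const. simpl. ring.
  - rewrite IH, <- sumR_plus. reflexivity.
Qed.

Lemma exp_le_mono x y : x <= y -> exp x <= exp y.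
Proof. intros [H|H]; [left; now apply exp_increasing | right; now subst]. Qed.

Lemma pow_le_decr x a b : 0 <= x <= 1 -> (a <= b)%nat -> x ^ b <= x ^ a.
Proof.
  intros Hx Hab. replace b with (a + (b - a))%nat by lia. rewrite pow_add.
  assert (0 <= x ^ a) by (apply pow_le; lra).
  assert (x ^ (b - a) <= 1) by (rewrite <- (pow1 (b - a)); apply pow_incr; lra).
  nra.
Qed.

Lemma ln_le_sub1 u : 0 < u -> ln u <= u - 1.
Proof.
  intros Hu. rewrite <- (ln_exp (u - 1)). apply ln_le; [exact Hu|].
  pose proof (exp_ineq1_le (u - 1)). lra.
Qed.

Lemma le_ln_of_exp_le x M : exp x <= M -> x <= ln M.
Proof. intros H. rewrite <- (ln_exp x). apply ln_le; [apply exp_pos | exact H]. Qed.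

Lemma nonneg_of_nonneg_derive (f f' : R -> R) :
  f 0 = 0 -> (forall x, 0 <= x -> is_derive f x (f' x)) ->
  (forall x, 0 <= x -> 0 <= f' x) -> forall x, 0 <= x -> 0 <= f x.
Proof.
  intros f0 Hder Hpos x Hx. destruct (Req_dec x 0) as [->|Hx0]; [lra|].
  destruct (MVT_cor2 f f' 0 x) as [c [Hc Hrange]]; [lra| |].
  - intros c Hc. apply is_derive_Reals, Hder. lra.
  - pose proof (Hpos c ltac:(lra)). nra.
Qed.

Lemma INR_ge1 n : (1 <= n)%nat -> 1 <= INR n.
Proof. intros Hn. apply (le_INR 1). exact Hn. Qed.

Lemma inv_INR_in_unit n : (1 <= n)%nat -> 0 < 1 / INR n <= 1.
Proof.
  intros Hn. pose proof (INR_ge1 n Hn). split.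
  - apply Rdiv_lt_0_compat; lra.
  - apply Rle_div_l; lra.
Qed.

Lemma one_minus_inv_INR_pos n : (2 <= n)%nat -> 0 < 1 - 1 / INR n.
Proof.
  intros Hn. assert (2 <= INR n) by (apply (le_INR 2); exact Hn).
  assert (1 / INR n < 1) by (apply Rlt_div_l; lra). lra.
Qed.

(** * Hoeffding's lemma for a loss in [0,1] *)

Lemma exp_chord x eta : 0 <= x <= 1 -> exp (- eta * x) <= 1 - x + x * exp (- eta).
Proof.
  intros Hx. set (c := - eta * x).
  assert (Tangent_eta : exp c * (1 + (- eta - c)) <= exp (- eta)).
  { replace (exp (- eta)) with (exp c * exp (- eta - c))
      by (rewrite <- exp_plus; f_equal; ring).
    apply Rmult_le_compat_l; [left; apply exp_pos | apply exp_ineq1_le]. }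
  assert (Tangent_0 : exp c * (1 + (0 - c)) <= 1).
  { assert (exp c * exp (0 - c) = 1)
      by (rewrite <- exp_plus; replace (c + (0 - c)) with 0 by ring; apply exp_0).
    pose proof (exp_ineq1_le (0 - c)). pose proof (exp_pos c). nra. }
  assert (exp c = x * (exp c * (1 + (- eta - c))) + (1 - x) * (exp c * (1 + (0 - c))))
    by (unfold c; ring).
  nra.
Qed.

(* Hoeffding's lemma for a Bernoulli(m) variable: ln E exp(-eta X) <= -eta m + eta^2/8.
   With D x = E exp(-x X), g x = x^2/8 - x m - ln (D x) satisfies g 0 = 0 and
   g' = h, h 0 = 0, h' = 1/4 - m(1-m) exp(-x) / D x ^ 2 >= 0. *)
Lemma hoeffding_bernoulli m eta : 0 <= m <= 1 -> 0 <= eta ->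
  1 - m + m * exp (- eta) <= exp (- eta * m + eta ^ 2 / 8).
Proof.
  intros Hm He.
  set (D := fun x => 1 - m + m * exp (- x)).
  assert (Dpos : forall x, 0 < D x) by (intro x; unfold D; pose proof (exp_pos (- x)); nra).
  set (h := fun x => x / 4 - m + m * exp (- x) / D x).
  set (g := fun x => x ^ 2 / 8 - x * m - ln (D x)).
  assert (D0 : D 0 = 1) by (unfold D; rewrite Ropp_0, exp_0; ring).
  assert (Hh : forall x, 0 <= x -> 0 <= h x).
  { apply (nonneg_of_nonneg_derive h (fun x => 1 / 4 - m * exp (- x) * (1 - m) / D x ^ 2)).
    - unfold h. rewrite D0, Ropp_0, exp_0. field.
    - intros x _. pose proof (Dpos x) as Dx. unfold h, D in *. auto_derive; [lra|]. field. lra.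
    - intros x _. pose proof (Dpos x). pose proof (exp_pos (- x)).
      assert (Var : m * exp (- x) * (1 - m) <= D x ^ 2 / 4)
        by (unfold D; pose proof (pow2_ge_0 (1 - m - m * exp (- x))); nra).
      assert (m * exp (- x) * (1 - m) / D x ^ 2 <= 1 / 4); [|lra].
      apply Rle_div_l; [nra|]. lra. }
  assert (Hg : 0 <= g eta).
  { apply (nonneg_of_nonneg_derive g h); [| |exact Hh|exact He].
    - unfold g. rewrite D0, ln_1. simpl. lra.
    - intros x _. pose proof (Dpos x) as Dx. unfold g, h, D in *. auto_derive; [lra|].
      field. lra. }
  unfold g in Hg. change (D eta <= exp (- eta * m + eta ^ 2 / 8)).
  rewrite <- (exp_ln (D eta)) by apply Dpos.
  apply exp_le_mono. lra.
Qed.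

Section ExponentialWeights.
Variables (d : nat) (eta : R).
Hypothesis Hd : (1 <= d)%nat.

Definition normalizer (p l : nat -> R) : R := sumR d (fun i => p i * exp (- eta * l i)).

Lemma normalizer_pos p l : (forall i, (i < d)%nat -> 0 < p i) -> 0 < normalizer p l.
Proof.
  intros Hp. apply sumR_pos; [exact Hd|]. intros i Hi.
  pose proof (Hp i Hi). pose proof (exp_pos (- eta * l i)). nra.
Qed.

Lemma preweight_pos p l j :
  (forall i, (i < d)%nat -> 0 < p i) -> (j < d)%nat -> 0 < preweight d eta p l j.
Proof.
  intros Hp Hj. unfold preweight. fold (normalizer p l).
  pose proof (Hp j Hj). pose proof (exp_pos (- eta * l j)).
  apply Rdiv_lt_0_compat; [nra | now apply normalizer_pos].
Qed.

Lemma preweight_sum p l :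
  (forall i, (i < d)%nat -> 0 < p i) -> sumR d (preweight d eta p l) = 1.
Proof.
  intros Hp. pose proof (normalizer_pos p l Hp).
  unfold preweight. rewrite (sumR_ext _ _ (fun j => / normalizer p l * (p j * exp (- eta * l j))))
    by (intros; unfold Rdiv, normalizer; ring).
  rewrite sumR_scal. fold (normalizer p l). field. lra.
Qed.

Lemma preweight_le_1 p l j :
  (forall i, (i < d)%nat -> 0 < p i) -> (j < d)%nat -> preweight d eta p l j <= 1.
Proof.
  intros Hp Hj. rewrite <- (preweight_sum p l Hp).
  apply sumR_term_le; [|exact Hj]. intros; left; now apply preweight_pos.
Qed.

Lemma normalizer_hoeffding p l :
  (forall i, (i < d)%nat -> 0 <= p i) -> sumR d p = 1 ->
  (forall i, (i < d)%nat -> 0 <= l i <= 1) -> 0 <= eta ->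
  normalizer p l <= exp (- eta * dotR d p l + eta ^ 2 / 8).
Proof.
  intros Hp Hs Hl He. set (m := dotR d p l).
  assert (Hm : 0 <= m <= 1).
  { unfold m, dotR. split.
    - apply sumR_nonneg. intros i Hi. pose proof (Hp i Hi). pose proof (Hl i Hi). nra.
    - rewrite <- Hs. apply sumR_le. intros i Hi. pose proof (Hp i Hi). pose proof (Hl i Hi). nra. }
  apply Rle_trans with (1 - m + m * exp (- eta)); [|now apply hoeffding_bernoulli].
  apply Rle_trans with (sumR d (fun i => p i - p i * l i + exp (- eta) * (p i * l i))).
  - apply sumR_le. intros i Hi.
    pose proof (exp_chord (l i) eta (Hl i Hi)). pose proof (Hp i Hi). nra.
  - rewrite sumR_plus, sumR_minus, sumR_scal. fold (dotR d p l). fold m. rewrite Hs. lra.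
Qed.

Lemma preweight_lower p l j :
  (forall i, (i < d)%nat -> 0 < p i) -> sumR d p = 1 ->
  (forall i, (i < d)%nat -> 0 <= l i <= 1) -> 0 <= eta -> (j < d)%nat ->
  p j * exp (eta * (dotR d p l - l j) - eta ^ 2 / 8) <= preweight d eta p l j.
Proof.
  intros Hp Hs Hl He Hj.
  pose proof (normalizer_hoeffding p l ltac:(intros; left; auto) Hs Hl He) as Hoeff.
  pose proof (normalizer_pos p l Hp).
  set (E := - eta * dotR d p l + eta ^ 2 / 8) in *.
  replace (eta * (dotR d p l - l j) - eta ^ 2 / 8) with (- eta * l j + - E) by (unfold E; ring).
  rewrite exp_plus, exp_Ropp. unfold preweight. fold (normalizer p l). unfold Rdiv.
  rewrite <- Rmult_assoc. apply Rmult_le_compat_l.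
  - pose proof (Hp j Hj). pose proof (exp_pos (- eta * l j)). nra.
  - now apply Rinv_le_contravar.
Qed.

End ExponentialWeights.

(** * The fixed-share forecaster on a window *)

Section FixedShare.
Variables (d : nat) (eta alpha : R) (ell : nat -> nat -> R).
Hypothesis Hd : (1 <= d)%nat.
Hypothesis Halpha : 0 <= alpha <= 1.

Notation P := (fixed_share d eta alpha ell).

Lemma INR_d_pos : 0 < INR d.
Proof. pose proof (INR_ge1 d Hd). lra. Qed.

Lemma share_floor_nonneg : 0 <= alpha / INR d.
Proof. pose proof INR_d_pos. apply Rmult_le_pos; [lra | left; now apply Rinv_0_lt_compat]. Qed.

Lemma fixed_share_succ t j : (1 <= t)%nat ->
  P (S t) j = alpha / INR d + (1 - alpha) * preweight d eta (P t) (ell t) j.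
Proof. intros Ht. destruct t as [|t]; [lia | reflexivity]. Qed.

Lemma fixed_share_invariant t :
  (forall j, (j < d)%nat -> 0 < P t j /\ alpha / INR d <= P t j) /\ sumR d (P t) = 1.
Proof.
  pose proof INR_d_pos. pose proof share_floor_nonneg.
  assert (Uniform : (forall j, (j < d)%nat -> 0 < 1 / INR d /\ alpha / INR d <= 1 / INR d)
                    /\ sumR d (fun _ => 1 / INR d) = 1).
  { split.
    - intros j _. split; [apply Rdiv_lt_0_compat; lra|].
      unfold Rdiv. apply Rmult_le_compat_r; [left; apply Rinv_0_lt_compat|]; lra.
    - rewrite sumR_const. field. lra. }
  induction t as [|t [IHpos IHsum]]; [exact Uniform|].
  destruct t as [|t]; [exact Uniform|].
  assert (Hp : forall i, (i < d)%nat -> 0 < P (S t) i) by (intros; now apply IHpos).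
  split.
  - intros j Hj. rewrite fixed_share_succ by lia.
    pose proof (preweight_pos d eta Hd (P (S t)) (ell (S t)) j Hp Hj).
    split; [|nra].
    destruct (Req_dec alpha 0) as [->|Hne]; [lra|].
    assert (0 < alpha / INR d) by (apply Rdiv_lt_0_compat; lra). nra.
  - rewrite (sumR_ext _ _ (fun j => alpha / INR d
                                   + (1 - alpha) * preweight d eta (P (S t)) (ell (S t)) j))
      by (intros; apply fixed_share_succ; lia).
    rewrite sumR_plus, sumR_const, sumR_scal, preweight_sum by assumption. field. lra.
Qed.

Definition gain (j t : nat) : R := eta * (dotR d (P t) (ell t) - ell t j) - eta ^ 2 / 8.

(* Chaining the exponential-weights lower bound with the mixing step
   P (t+1) >= (1 - alpha) v (t+1) along the rounds r .. r+k. *)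
Lemma fixed_share_telescope j r k : (j < d)%nat -> (1 <= r)%nat -> 0 <= eta ->
  (forall t i, (r <= t <= r + k)%nat -> (i < d)%nat -> 0 <= ell t i <= 1) ->
  P r j * (1 - alpha) ^ k * exp (sumR (S k) (fun i => gain j (r + i)))
  <= preweight d eta (P (r + k)) (ell (r + k)) j.
Proof.
  intros Hj Hr He. pose proof share_floor_nonneg.
  assert (Hinv : forall t, (forall i, (i < d)%nat -> 0 < P t i) /\ sumR d (P t) = 1)
    by (intro t; destruct (fixed_share_invariant t) as [A B]; split; [intros; now apply A | exact B]).
  induction k as [|k IH]; intros Hl.
  - rewrite Nat.add_0_r, pow_O, Rmult_1_r. simpl sumR. rewrite Rplus_0_l, Nat.add_0_r.
    destruct (Hinv r) as [Hpos Hsum].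
    apply preweight_lower; auto. intros i Hi. apply Hl; [lia | exact Hi].
  - specialize (IH ltac:(intros t i Ht Hi; apply Hl; [lia | exact Hi])).
    rewrite Nat.add_succ_r. destruct (Hinv (S (r + k))) as [Hpos Hsum].
    assert (Mixing : (1 - alpha) * preweight d eta (P (r + k)) (ell (r + k)) j
                     <= P (S (r + k)) j)
      by (rewrite fixed_share_succ by lia; lra).
    assert (Step := preweight_lower d eta Hd (P (S (r + k))) (ell (S (r + k))) j Hpos Hsum
                      ltac:(intros i Hi; apply Hl; [lia | exact Hi]) He Hj).
    change (sumR (S (S k)) (fun i => gain j (r + i)))
      with (sumR (S k) (fun i => gain j (r + i)) + gain j (r + S k)).
    rewrite exp_plus, Nat.add_succ_r. unfold gain at 2.
    set (A := exp (sumR (S k) (fun i => gain j (r + i)))) in *.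
    set (G := exp (eta * (dotR d (P (S (r + k))) (ell (S (r + k))) - ell (S (r + k)) j)
                   - eta ^ 2 / 8)) in *.
    assert (0 < G) by apply exp_pos.
    replace (P r j * (1 - alpha) ^ S k * (A * G))
      with ((1 - alpha) * (P r j * (1 - alpha) ^ k * A) * G) by (simpl; ring).
    apply Rle_trans with (P (S (r + k)) j * G); [|exact Step].
    apply Rmult_le_compat_r; [lra|].
    apply Rle_trans with ((1 - alpha) * preweight d eta (P (r + k)) (ell (r + k)) j); [|exact Mixing].
    apply Rmult_le_compat_l; [lra | exact IH].
Qed.

Lemma fixed_share_window_bound j r s tau0 : (j < d)%nat -> (1 <= r)%nat -> (r <= s)%nat ->
  (s + 1 - r <= tau0)%nat -> 0 <= eta ->
  (forall t i, (r <= t <= s)%nat -> (i < d)%nat -> 0 <= ell t i <= 1) ->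
  alpha / INR d * (1 - alpha) ^ (tau0 - 1)
    * exp (eta * sum_range r s (fun t => dotR d (P t) (ell t) - ell t j)
           - INR tau0 * eta ^ 2 / 8)
  <= 1.
Proof.
  intros Hj Hr Hrs Hlen He Hl. set (k := (s - r)%nat).
  assert (Hs : s = (r + k)%nat) by (unfold k; lia).
  assert (Gains : sumR (S k) (fun i => gain j (r + i))
                  = eta * sum_range r s (fun t => dotR d (P t) (ell t) - ell t j)
                    - INR (S k) * (eta ^ 2 / 8)).
  { unfold gain, sum_range. replace (S s - r)%nat with (S k) by lia.
    rewrite sumR_minus, sumR_scal, sumR_const. reflexivity. }
  destruct (fixed_share_invariant r) as [Weights_r _]. destruct (Weights_r j Hj) as [_ Hfloor].
  destruct (fixed_share_invariant s) as [Weights_s _].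
  pose proof (fixed_share_telescope j r k Hj Hr He ltac:(intros; apply Hl; lia)) as Tel.
  rewrite <- Hs in Tel.
  pose proof (preweight_le_1 d eta Hd (P s) (ell s) j ltac:(intros; now apply Weights_s) Hj).
  pose proof share_floor_nonneg.
  assert (Hpow : (1 - alpha) ^ (tau0 - 1) <= (1 - alpha) ^ k)
    by (apply pow_le_decr; [lra | lia]).
  assert (0 <= (1 - alpha) ^ (tau0 - 1)) by (apply pow_le; lra).
  assert (Hexp : exp (eta * sum_range r s (fun t => dotR d (P t) (ell t) - ell t j)
                      - INR tau0 * eta ^ 2 / 8)
                 <= exp (sumR (S k) (fun i => gain j (r + i)))).
  { rewrite Gains. apply exp_le_mono.
    assert (INR (S k) <= INR tau0) by (apply le_INR; lia).
    pose proof (pow2_ge_0 eta). nra. }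
  pose proof (exp_pos (sumR (S k) (fun i => gain j (r + i)))).
  apply Rle_trans with (P r j * (1 - alpha) ^ k * exp (sumR (S k) (fun i => gain j (r + i))));
    [|lra].
  apply Rmult_le_compat; [nra | left; apply exp_pos | | exact Hexp].
  apply Rmult_le_compat; lra.
Qed.

End FixedShare.

(** * Binary entropy *)

Lemma xlnx_nonpos x : 0 <= x <= 1 -> xlnx x <= 0.
Proof.
  intros Hx. unfold xlnx. destruct (Req_EM_T x 0) as [_|Hx0]; [lra|].
  assert (ln x <= 0) by (rewrite <- ln_1; apply ln_le; lra). nra.
Qed.

Lemma hbin_nonneg x : 0 <= x <= 1 -> 0 <= hbin x.
Proof.
  intros Hx. unfold hbin.
  pose proof (xlnx_nonpos x Hx). pose proof (xlnx_nonpos (1 - x) ltac:(lra)). lra.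
Qed.

(* h(x) <= x (1 - ln x), since -(1-x) ln(1-x) <= x. *)
Lemma hbin_le x : 0 < x <= 1 -> hbin x <= x * (1 - ln x).
Proof.
  intros Hx. unfold hbin, xlnx.
  destruct (Req_EM_T x 0) as [E|_]; [lra|].
  destruct (Req_EM_T (1 - x) 0) as [_|Hx1]; [lra|].
  assert (Hy : 0 < 1 - x) by lra.
  pose proof (ln_le_sub1 (/ (1 - x)) ltac:(now apply Rinv_0_lt_compat)) as Hln.
  rewrite ln_Rinv in Hln by exact Hy.
  assert (- ((1 - x) * ln (1 - x)) <= (1 - x) * (/ (1 - x) - 1)) by nra.
  replace ((1 - x) * (/ (1 - x) - 1)) with x in * by (field; lra). lra.
Qed.

Lemma n_hbin_inv n : (1 <= n)%nat ->
  INR n * hbin (1 / INR n) = ln (INR n) - (INR n - 1) * ln (1 - 1 / INR n).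
Proof.
  intros Hn. pose proof (inv_INR_in_unit n Hn) as [Hinv _].
  destruct (Nat.eq_dec n 1) as [->|Hne].
  - change (INR 1) with 1. unfold hbin, xlnx.
    replace (1 / 1) with 1 by field. replace (1 - 1) with 0 by ring.
    destruct (Req_EM_T 1 0); [lra|]. destruct (Req_EM_T 0 0); [|lra].
    rewrite ln_1. ring.
  - pose proof (one_minus_inv_INR_pos n ltac:(lia)). pose proof (INR_ge1 n Hn).
    unfold hbin, xlnx.
    destruct (Req_EM_T (1 / INR n) 0); [lra|].
    destruct (Req_EM_T (1 - 1 / INR n) 0); [lra|].
    unfold Rdiv. rewrite Rmult_1_l, ln_Rinv by lra. field. lra.
Qed.

(* The survival factor of an expert over a window of length tau0 at rate 1/tau0. *)
Lemma survival_pos n : (1 <= n)%nat -> 0 < (1 - 1 / INR n) ^ (n - 1).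
Proof.
  intros Hn. destruct (Nat.eq_dec n 1) as [->|Hne]; [simpl; lra|].
  apply pow_lt, one_minus_inv_INR_pos. lia.
Qed.

(* The logarithmic cost of the window bound at alpha = 1/tau0 is
   ln d + tau0 h(1/tau0). *)
Lemma ln_window_cost n d : (1 <= n)%nat -> (1 <= d)%nat ->
  ln (INR n * INR d / (1 - 1 / INR n) ^ (n - 1)) = INR n * hbin (1 / INR n) + ln (INR d).
Proof.
  intros Hn Hd. rewrite n_hbin_inv by exact Hn.
  pose proof (INR_ge1 d Hd). pose proof (INR_ge1 n Hn).
  destruct (Nat.eq_dec n 1) as [->|Hne].
  - simpl pow. change (INR 1) with 1. replace (1 * INR d / 1) with (INR d) by field.
    rewrite ln_1. ring.
  - pose proof (one_minus_inv_INR_pos n ltac:(lia)).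
    unfold Rdiv at 1.
    rewrite ln_mult, ln_mult, ln_Rinv, ln_pow, minus_INR
      by (try apply Rinv_0_lt_compat; try apply pow_lt; try nra; lia).
    change (INR 1) with 1. ring.
Qed.

Lemma window_cost_le n d : (1 <= n)%nat -> (1 <= d)%nat ->
  INR n * hbin (1 / INR n) + ln (INR d) <= ln (exp 1 * INR d * INR n).
Proof.
  intros Hn Hd. pose proof (INR_ge1 d Hd). pose proof (INR_ge1 n Hn).
  pose proof (hbin_le (1 / INR n) (inv_INR_in_unit n Hn)) as Hh.
  assert (E : INR n * (1 / INR n * (1 - ln (1 / INR n))) = 1 + ln (INR n)).
  { unfold Rdiv. rewrite Rmult_1_l, ln_Rinv by lra. field. lra. }
  rewrite ln_mult, ln_mult, ln_exp by (try apply Rmult_lt_0_compat; try apply exp_pos; lra).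
  assert (INR n * hbin (1 / INR n) <= 1 + ln (INR n)) by (rewrite <- E; nra).
  lra.
Qed.

Lemma fixed_share_expert_regret d tau0 eta ell r s j :
  (1 <= d)%nat -> (1 <= tau0)%nat -> 0 < eta -> (j < d)%nat ->
  (1 <= r)%nat -> (r <= s)%nat -> (s + 1 - r <= tau0)%nat ->
  (forall t i, (r <= t <= s)%nat -> (i < d)%nat -> 0 <= ell t i <= 1) ->
  eta * sum_range r s (fun t => dotR d (fixed_share d eta (1 / INR tau0) ell t) (ell t) - ell t j)
  <= INR tau0 * hbin (1 / INR tau0) + ln (INR d) + INR tau0 * eta ^ 2 / 8.
Proof.
  intros Hd Htau He Hj Hr Hrs Hlen Hl.
  pose proof (inv_INR_in_unit tau0 Htau) as Halpha.
  pose proof (survival_pos tau0 Htau) as Hc.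
  pose proof (INR_ge1 d Hd). pose proof (INR_ge1 tau0 Htau).
  pose proof (fixed_share_window_bound d eta (1 / INR tau0) ell Hd ltac:(lra)
                j r s tau0 Hj Hr Hrs Hlen ltac:(lra) Hl) as Bound.
  set (X := eta * sum_range r s _ - INR tau0 * eta ^ 2 / 8) in Bound.
  set (c := (1 - 1 / INR tau0) ^ (tau0 - 1)) in *.
  assert (Hexp : exp X <= INR tau0 * INR d / c).
  { apply Rle_div_r; [exact Hc|].
    replace (1 / INR tau0 / INR d * c * exp X) with (exp X * c / (INR tau0 * INR d)) in Bound
      by (field; lra).
    apply Rle_div_l in Bound; [lra | nra]. }
  apply le_ln_of_exp_le in Hexp. unfold c in Hexp.
  rewrite ln_window_cost in Hexp by assumption.
  unfold X in Hexp. lra.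
Qed.

(* The regret against a mixture q is the q-average of the regrets against
   the experts, so a uniform bound on the latter bounds the former. *)
Lemma regret_le_of_expert_regret_le d (P : nat -> nat -> R) ell q r s B : in_simplex d q ->
  (forall j, (j < d)%nat -> sum_range r s (fun t => dotR d (P t) (ell t) - ell t j) <= B) ->
  interval_regret d P ell q r s <= B.
Proof.
  intros [Hq Hqsum] Hexpert. unfold interval_regret, sum_range in *.
  set (K := (S s - r)%nat) in *.
  assert (Average : forall t, dotR d (P t) (ell t) - dotR d q (ell t)
                              = sumR d (fun j => q j * (dotR d (P t) (ell t) - ell t j))).
  { intro t. rewrite (sumR_ext _ _ (fun j => dotR d (P t) (ell t) * q j - q j * ell t j))
      by (intros; ring).
    rewrite sumR_minus, sumR_scal, Hqsum. unfold dotR. ring. }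
  rewrite (sumR_ext K _ _ (fun i _ => Average (r + i)%nat)), sumR_exchange.
  apply Rle_trans with (sumR d (fun j => B * q j)).
  - apply sumR_le. intros j Hj. rewrite sumR_scal, Rmult_comm.
    apply Rmult_le_compat_r; [apply Hq; exact Hj | apply Hexpert; exact Hj].
  - right. rewrite sumR_scal, Hqsum. ring.
Qed.

Lemma single_expert_regret_zero eta alpha ell r s : 0 <= alpha <= 1 ->
  sum_range r s (fun t => dotR 1 (fixed_share 1 eta alpha ell t) (ell t) - ell t 0%nat) = 0.
Proof.
  intros Halpha. unfold sum_range. rewrite (sumR_ext _ _ (fun _ => 0)).
  - rewrite sumR_const. ring.
  - intros i _. destruct (fixed_share_invariant 1 eta alpha ell ltac:(lia) Halpha (r + i))
      as [_ Hsum].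
    unfold dotR. simpl in Hsum |- *.
    replace (fixed_share 1 eta alpha ell (r + i) 0%nat) with 1 by lra. ring.
Qed.

Lemma tuned_learning_rate L tau x : 0 < L -> 0 < tau ->
  sqrt (8 * L / tau) * x <= L + tau * sqrt (8 * L / tau) ^ 2 / 8 ->
  x <= sqrt (tau / 2 * L).
Proof.
  intros HL Htau Hx. set (eta := sqrt (8 * L / tau)) in *.
  assert (He : 0 < eta) by (apply sqrt_lt_R0, Rdiv_lt_0_compat; lra).
  assert (He2 : eta ^ 2 = 8 * L / tau)
    by (unfold eta; rewrite <- Rsqr_pow2; apply Rsqr_sqrt; left; apply Rdiv_lt_0_compat; lra).
  assert (Hopt : eta * sqrt (tau / 2 * L) = 2 * L).
  { unfold eta. rewrite <- sqrt_mult by (left; apply Rdiv_lt_0_compat || apply Rmult_lt_0_compat; lra).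
    replace (8 * L / tau * (tau / 2 * L)) with (2 * L * (2 * L)) by (field; lra).
    apply sqrt_square. lra. }
  rewrite He2 in Hx. apply (Rmult_le_reg_l eta); [exact He|].
  rewrite Hopt. replace (tau * (8 * L / tau) / 8) with L in Hx by (field; lra). lra.
Qed.

Theorem corollary2 :
  forall (d T tau0 : nat),
    (1 <= d)%nat -> (1 <= T)%nat -> (1 <= tau0 <= T)%nat ->
    exists (eta alpha : R), 0 < eta /\ 0 <= alpha <= 1 /\
      (forall ell : nat -> nat -> R,
         (forall t i, (1 <= t <= T)%nat -> (i < d)%nat -> 0 <= ell t i <= 1) ->
         forall r s : nat, (1 <= r)%nat -> (r <= s)%nat -> (s <= T)%nat ->
           (s + 1 - r <= tau0)%nat ->
           forall q : nat -> R, in_simplex d q ->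
             interval_regret d (fixed_share d eta alpha ell) ell q r s
             <= sqrt (INR tau0 / 2 * (INR tau0 * hbin (1 / INR tau0) + ln (INR d))))
      /\ sqrt (INR tau0 / 2 * (INR tau0 * hbin (1 / INR tau0) + ln (INR d)))
         <= sqrt (INR tau0 / 2 * ln (exp 1 * INR d * INR tau0)).
Proof.
  intros d T tau0 Hd _ [Htau _].
  set (L := INR tau0 * hbin (1 / INR tau0) + ln (INR d)).
  pose proof (inv_INR_in_unit tau0 Htau) as Halpha.
  pose proof (INR_ge1 tau0 Htau).
  assert (Hcost : sqrt (INR tau0 / 2 * L) <= sqrt (INR tau0 / 2 * ln (exp 1 * INR d * INR tau0)))
    by (apply sqrt_le_1_alt, Rmult_le_compat_l; [lra | now apply window_cost_le]).
  destruct (Nat.eq_dec d 1) as [->|Hd2].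
  - exists 1, (1 / INR tau0). split; [lra|]. split; [lra|]. split; [|exact Hcost].
    intros ell _ r s _ _ _ _ q Hq. apply regret_le_of_expert_regret_le; [exact Hq|].
    intros j Hj. replace j with 0%nat by lia.
    rewrite single_expert_regret_zero by lra. apply sqrt_pos.
  - assert (HL : 0 < L).
    { assert (0 < ln (INR d)) by (rewrite <- ln_1; apply ln_increasing; [lra | apply (lt_INR 1); lia]).
      pose proof (hbin_nonneg (1 / INR tau0) ltac:(lra)). unfold L. nra. }
    exists (sqrt (8 * L / INR tau0)), (1 / INR tau0).
    split; [apply sqrt_lt_R0, Rdiv_lt_0_compat; lra|]. split; [lra|]. split; [|exact Hcost].
    intros ell Hl r s Hr Hrs HsT Hlen q Hq. apply regret_le_of_expert_regret_le; [exact Hq|].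
    intros j Hj. apply tuned_learning_rate; [exact HL | lra|].
    apply fixed_share_expert_regret; auto.
    + apply sqrt_lt_R0, Rdiv_lt_0_compat; lra.
    + intros t i Ht Hi. apply Hl; [lia | exact Hi].
Qed.
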